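(* Let $G$ be a topological group with identity $e$, equipped with its left uniformity. If $U\subseteq G\times G$ belongs to the left uniformity and is an equivalence relation on $G$, then $A=\bigcap_{g\in G} g\,U[g^{-1}]$ is an open subgroup of $G$ with $A_L\subseteq U$. Consequently the sets $A_L$, $A$ ranging over the open subgroups of $G$, form a base for the uniformity $\mathcal U_{eq}$ associated to the left uniformity, and the following are equivalent: (i) $G$ is uniformly $0$-dimensional with respect to the left uniformity; (ii) $G$ is strongly $0$-dimensional at $e$ with respect to the left uniformity; (iii) $G$ is strongly $0$-dimensional with respect to the left uniformity; (iv) the open subgroups of $G$ form a local base for the topology of $G$ at $e$. The same holds with the right uniformity and $A_R$.
   Context: A topological group is a group with a topology making multiplication $G\times G\to G$ and inversion continuous. For $A\subseteq G$: $A_L=\{(x,y): x^{-1}y\in A\}$, $A_R=\{(x,y): yx^{-1}\in A\}$; for $U\subseteq G\times G$, $U[x]=\{y:(x,y)\in U\}$. The left (resp. right) uniformity of $G$ is the uniformity having base $\{W_L: W \text{ open}, e\in W\}$ (resp. $\{W_R\}$); a uniformity on $X$ is a nonempty collection of subsets of $X\times X$ containing the diagonal, closed under transposition, finite intersections and supersets, and such that each member contains $V*V=\{(x,z):\exists y,(x,y),(y,z)\in V\}$ for some member $V$. $\mathcal U_{eq}$ is the uniformity with base the members of the given uniformity that are equivalence relations. $A,B$ are uniformly separated if some member $U$ contains no $(x,y)$ with $x\in A$, $y\in B$. Uniformly $0$-dimensional: the uniformity has a base of equivalence relations. Strongly $0$-dimensional at $x$: for each open $W\ni x$ there is $V\subseteq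 W$ with $x\in V$ and $V$ uniformly separated from its complement; strongly $0$-dimensional: this holds at every point. *)

Set Implicit Arguments.

Record TopGroup := {
  carrier :> Type;
  mul : carrier -> carrier -> carrier;
  inv : carrier -> carrier;
  e : carrier;
  is_open : (carrier -> Prop) -> Prop;
  mulA : forall x y z, mul x (mul y z) = mul (mul x y) z;
  mul1g : forall x, mul e x = x;
  mulVg : forall x, mul (inv x) x = e;
  open_full : is_open (fun _ => True);
  open_inter : forall U V, is_open U -> is_open V -> is_open (fun x => U x /\ V x);
  open_union : forall F : (carrier -> Prop) -> Prop,
      (forall W, F W -> is_open W) -> is_open (fun x => exists W, F W /\ W x);
  mul_cont : forall x y W, is_open W -> W (mul x y) ->
      exists U V, is_open U /\ U x /\ is_open V /\ V y /\
                  (forall a b, U a -> V b -> W (mul a b));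
  inv_cont : forall x W, is_open W -> W (inv x) ->
      exists V, is_open V /\ V x /\ (forall y, V y -> W (inv y))
}.

Section Defs.
Variable G : TopGroup.
Notation mulG := (@mul G).
Notation invG := (@inv G).
Notation is_open := (@is_open G).

Definition subrel {X : Type} (U V : X -> X -> Prop) : Prop :=
  forall x y, U x y -> V x y.

Definition subset {X : Type} (A B : X -> Prop) : Prop := forall x, A x -> B x.

Definition is_equivalence {X : Type} (U : X -> X -> Prop) : Prop :=
  (forall x, U x x) /\ (forall x y, U x y -> U y x) /\
  (forall x y z, U x y -> U y z -> U x z).

Definition relL (A : G -> Prop) : G -> G -> Prop := fun x y => A (mulG (invG x) y).
Definition relR (A : G -> Prop) : G -> G -> Prop := fun x y => A (mulG y (invG x)).

Definition section {X : Type} (U : X -> X -> Prop) (x : X) : X -> Prop := fun y => U x y.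

Definition leftUnif (U : G -> G -> Prop) : Prop :=
  exists W, is_open W /\ W (e G) /\ subrel (relL W) U.
Definition rightUnif (U : G -> G -> Prop) : Prop :=
  exists W, is_open W /\ W (e G) /\ subrel (relR W) U.

Definition Ueq {X : Type} (unif : (X -> X -> Prop) -> Prop) (U : X -> X -> Prop) : Prop :=
  exists V, unif V /\ is_equivalence V /\ subrel V U.

Definition subgroup (A : G -> Prop) : Prop :=
  A (e G) /\ (forall x y, A x -> A y -> A (mulG x y)) /\ (forall x, A x -> A (invG x)).

Definition open_subgroup (A : G -> Prop) : Prop := subgroup A /\ is_open A.

Definition capL (U : G -> G -> Prop) : G -> Prop :=
  fun a => forall g : G, exists y, section U (invG g) y /\ a = mulG g y.
Definition capR (U : G -> G -> Prop) : G -> Prop :=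
  fun a => forall g : G, exists y, section U (invG g) y /\ a = mulG y g.

Definition unif_separated {X : Type} (unif : (X -> X -> Prop) -> Prop) (A B : X -> Prop) : Prop :=
  exists U, unif U /\ forall x y, A x -> B y -> ~ U x y.

Definition unif_zero_dim {X : Type} (unif : (X -> X -> Prop) -> Prop) : Prop :=
  forall U, unif U -> exists V, unif V /\ is_equivalence V /\ subrel V U.

Definition strongly_zero_dim_at (unif : (G -> G -> Prop) -> Prop) (x : G) : Prop :=
  forall W, is_open W -> W x ->
    exists V, subset V W /\ V x /\ unif_separated unif V (fun y => ~ V y).

Definition strongly_zero_dim (unif : (G -> G -> Prop) -> Prop) : Prop :=
  forall x, strongly_zero_dim_at unif x.

Definition open_subgroups_local_base : Prop :=
  forall W, is_open W -> W (e G) -> exists A, open_subgroup A /\ subset A W.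

End Defs.

Arguments relL {G}. Arguments relR {G}. Arguments leftUnif {G}. Arguments rightUnif {G}.
Arguments subgroup {G}. Arguments open_subgroup {G}. Arguments capL {G}. Arguments capR {G}.
Arguments strongly_zero_dim_at {G}. Arguments strongly_zero_dim {G}.

(* The equivalence class of e for a uniform equivalence relation U is not in
   general a subgroup, but A := {a | forall x, U x (x a)}, which is exactly
   the intersection of the g U[g^-1], is: it is the set of a whose right
   translation keeps every point in its U-class.  It contains a neighbourhood of e (as U contains some W_L),
   hence is open, and A_L is contained in U.  Conversely A_L is a uniform
   equivalence relation for every open subgroup A, so the A_L form a base of
   U_eq.  For the equivalences, a set V separated from its complement by W_L
   is stable under right multiplication by W, so its right stabilizer is an
   open subgroup inside V when e is in V.  The right-uniformity statements are
   the left ones for the opposite group. *)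
From Stdlib Require Import Setoid Classical FunctionalExtensionality PropExtensionality.

Set Implicit Arguments.

Section LeftUniformity.
Variable G : TopGroup.
Local Notation "x ⋆ y" := (@mul G x y) (at level 40, left associativity).
Local Notation iv := (@inv G).
Local Notation E := (e G).

Lemma mulgV (x : G) : x ⋆ iv x = E.
Proof.
  set (t := x ⋆ iv x).
  assert (idem : t ⋆ t = t).
  { unfold t. rewrite <- mulA, (mulA _ (iv x) x (iv x)), mulVg, mul1g. reflexivity. }
  assert (Ht : t = iv t ⋆ (t ⋆ t)) by (rewrite mulA, mulVg, mul1g; reflexivity).
  rewrite idem, mulVg in Ht. exact Ht.
Qed.

Lemma mulg1 (x : G) : x ⋆ E = x.
Proof. rewrite <- (mulVg _ x), mulA, mulgV, mul1g. reflexivity. Qed.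

Lemma invg1 : iv E = E.
Proof. rewrite <- (mulg1 (iv E)). apply mulVg. Qed.

Lemma mulKg (x y : G) : iv x ⋆ (x ⋆ y) = y.
Proof. rewrite mulA, mulVg, mul1g. reflexivity. Qed.

Lemma mulKVg (x y : G) : x ⋆ (iv x ⋆ y) = y.
Proof. rewrite mulA, mulgV, mul1g. reflexivity. Qed.

Lemma invgK (x : G) : iv (iv x) = x.
Proof. rewrite <- (mulg1 (iv (iv x))), <- (mulVg _ x), mulA, mulVg, mul1g. reflexivity. Qed.

Lemma invMg (x y : G) : iv (x ⋆ y) = iv y ⋆ iv x.
Proof.
  assert (H : (x ⋆ y) ⋆ (iv y ⋆ iv x) = E).
  { rewrite mulA, <- (mulA _ x y), mulgV, mulg1, mulgV. reflexivity. }
  rewrite <- (mul1g _ (iv y ⋆ iv x)), <- (mulVg _ (x ⋆ y)), <- mulA, H, mulg1.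
  reflexivity.
Qed.

Lemma open_of_local (S : G -> Prop) :
  (forall x, S x -> exists V, is_open G V /\ V x /\ subset V S) -> is_open G S.
Proof.
  intros H.
  assert (union : (fun x => exists W, (is_open G W /\ subset W S) /\ W x) = S).
  { apply functional_extensionality; intro x; apply propositional_extensionality.
    split.
    - intros [W [[_ WS] Wx]]. exact (WS x Wx).
    - intros Sx. destruct (H x Sx) as [V [Vo [Vx VS]]]. exists V. tauto. }
  rewrite <- union. apply open_union. intros W [Wo _]. exact Wo.
Qed.

Lemma open_lmul_preimage (x : G) (W : G -> Prop) :
  is_open G W -> is_open G (fun y => W (x ⋆ y)).
Proof.
  intros Wo. apply open_of_local. intros y Wxy.
  destruct (mul_cont G x y W Wo Wxy) as [U [V [_ [Ux [Vo [Vy UVW]]]]]].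
  exists V. repeat split; auto. intros b Vb. exact (UVW x b Ux Vb).
Qed.

Lemma open_inv_preimage (W : G -> Prop) : is_open G W -> is_open G (fun y => W (iv y)).
Proof.
  intros Wo. apply open_of_local. intros y Wy.
  destruct (inv_cont G y W Wo Wy) as [V [Vo [Vy VW]]].
  exists V. repeat split; auto.
Qed.

Lemma subgroup_open_of_nbhs (A W : G -> Prop) :
  subgroup A -> is_open G W -> W E -> subset W A -> is_open G A.
Proof.
  intros [_ [AM _]] Wo We WA. apply open_of_local. intros a Aa.
  exists (fun y => W (iv a ⋆ y)). repeat split.
  - apply open_lmul_preimage, Wo.
  - rewrite mulVg. exact We.
  - intros y Wy. rewrite <- (mulKVg a y). exact (AM _ _ Aa (WA _ Wy)).
Qed.

Lemma relL_leftUnif (A : G -> Prop) : is_open G A -> A E -> leftUnif (relL A).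
Proof. intros Ao Ae. exists A. repeat split; auto. intros x y h. exact h. Qed.

Lemma relL_equivalence (A : G -> Prop) : subgroup A -> is_equivalence (relL A).
Proof.
  intros [A1 [AM AV]]. unfold relL. repeat split.
  - intros x. rewrite mulVg. exact A1.
  - intros x y Axy. specialize (AV _ Axy). rewrite invMg, invgK in AV. exact AV.
  - intros x y z Axy Ayz. specialize (AM _ _ Axy Ayz).
    rewrite mulA, <- (mulA _ (iv x) y), mulgV, mulg1 in AM. exact AM.
Qed.

Lemma capL_iff (U : G -> G -> Prop) (a : G) : capL U a <-> forall x, U x (x ⋆ a).
Proof.
  unfold capL, section. split.
  - intros H x. destruct (H (iv x)) as [y [Uy ->]].
    rewrite invgK in Uy. rewrite mulKVg. exact Uy.
  - intros H g. exists (iv g ⋆ a). split; [apply H | rewrite mulKVg; reflexivity].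
Qed.

Lemma capL_subgroup (U : G -> G -> Prop) : is_equivalence U -> subgroup (capL U).
Proof.
  intros [Urefl [Usym Utrans]]. repeat split.
  - rewrite capL_iff. intros x. rewrite mulg1. apply Urefl.
  - intros a b. rewrite !capL_iff. intros Ha Hb x.
    rewrite mulA. exact (Utrans _ _ _ (Ha x) (Hb (x ⋆ a))).
  - intros a. rewrite !capL_iff. intros Ha x. apply Usym.
    specialize (Ha (x ⋆ iv a)). rewrite <- mulA, mulVg, mulg1 in Ha. exact Ha.
Qed.

Lemma relL_capL_sub (U : G -> G -> Prop) : subrel (relL (capL U)) U.
Proof.
  intros x y H. unfold relL in H. rewrite capL_iff in H. specialize (H x). rewrite mulKVg in H. exact H.
Qed.

Lemma capL_open_subgroup (U : G -> G -> Prop) :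
  leftUnif U -> is_equivalence U ->
  open_subgroup (capL U) /\ subrel (relL (capL U)) U.
Proof.
  intros [W [Wo [We WU]]] Ueqv.
  assert (Asub := capL_subgroup Ueqv).
  split; [split; [exact Asub |] | apply relL_capL_sub].
  apply (@subgroup_open_of_nbhs _ W Asub Wo We). intros w Ww. rewrite capL_iff. intros x.
  apply WU. unfold relL. rewrite mulKg. exact Ww.
Qed.

Lemma open_subgroup_Ueq (A : G -> Prop) : open_subgroup A -> Ueq (@leftUnif G) (relL A).
Proof.
  intros [Asub Ao]. exists (relL A). split; [| split].
  - exact (@relL_leftUnif A Ao (proj1 Asub)).
  - exact (@relL_equivalence A Asub).
  - intros x y h. exact h.
Qed.

Lemma Ueq_open_subgroup (U : G -> G -> Prop) :
  Ueq (@leftUnif G) U -> exists A, open_subgroup A /\ subrel (relL A) U.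
Proof.
  intros [V [Vunif [Veqv VU]]]. destruct (capL_open_subgroup Vunif Veqv) as [HA AV].
  exists (capL V). split; [exact HA |]. intros x y h. exact (VU _ _ (AV _ _ h)).
Qed.

Definition rstab (V : G -> Prop) : G -> Prop := fun a => forall g, V g <-> V (g ⋆ a).

Lemma rstab_subgroup (V : G -> Prop) : subgroup (rstab V).
Proof.
  unfold rstab. split; [| split].
  - intros g. rewrite mulg1. tauto.
  - intros a b Ha Hb g. rewrite mulA, (Ha g). apply Hb.
  - intros a Ha g. rewrite (Ha (g ⋆ iv a)), <- mulA, mulVg, mulg1. tauto.
Qed.

Lemma separated_rmul_stable (V W : G -> Prop) :
  (forall x y, V x -> ~ V y -> ~ relL W x y) -> forall x w, V x -> W w -> V (x ⋆ w).
Proof.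
  intros Vsep x w Vx Ww. apply NNPP. intros Vxw.
  apply (Vsep x (x ⋆ w) Vx Vxw). unfold relL. rewrite mulKg. exact Ww.
Qed.

Lemma zero_dim_strongly_at_e :
  unif_zero_dim (@leftUnif G) -> strongly_zero_dim_at (@leftUnif G) E.
Proof.
  intros H W Wo We.
  destruct (H (relL W) (@relL_leftUnif W Wo We)) as [V [Vunif [[Vrefl [_ Vtrans]] VW]]].
  exists (V E). repeat split.
  - intros y Vy. specialize (VW _ _ Vy). unfold relL in VW.
    rewrite invg1, mul1g in VW. exact VW.
  - apply Vrefl.
  - exists V. split; [exact Vunif |]. intros x y Vx Vy Vxy. exact (Vy (Vtrans _ _ _ Vx Vxy)).
Qed.

Lemma local_base_of_strongly_at_e :
  strongly_zero_dim_at (@leftUnif G) E -> open_subgroups_local_base G.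
Proof.
  intros H W Wo We.
  destruct (H W Wo We) as [V [VW [Ve [U [[W' [W'o [W'e W'U]]] Usep]]]]].
  assert (Vsep : forall x y, V x -> ~ V y -> ~ relL W' x y)
    by (intros x y Vx Vy Wxy; exact (Usep x y Vx Vy (W'U _ _ Wxy))).
  assert (stable := separated_rmul_stable V W' Vsep).
  exists (rstab V). split; [split; [apply rstab_subgroup |] |].
  - apply (@subgroup_open_of_nbhs _ (fun w => W' w /\ W' (iv w)) (rstab_subgroup V)).
    + apply open_inter; [exact W'o | apply open_inv_preimage, W'o].
    + rewrite invg1. tauto.
    + intros w [Ww Wiw] g. split; intros Vg.
      * exact (stable g w Vg Ww).
      * rewrite <- (mulg1 g), <- (mulgV w), mulA. exact (stable _ _ Vg Wiw).
  - intros a Ha. apply VW. rewrite <- (mul1g _ a). exact (proj1 (Ha E) Ve).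
Qed.

Lemma strongly_of_local_base :
  open_subgroups_local_base G -> strongly_zero_dim (@leftUnif G).
Proof.
  intros H x W Wo Wx.
  assert (Wx1 : W (x ⋆ E)) by (rewrite mulg1; exact Wx).
  destruct (H _ (@open_lmul_preimage x W Wo) Wx1) as [A [[Asub Ao] AW]].
  destruct Asub as [A1 [AM AV]].
  exists (fun y => A (iv x ⋆ y)). repeat split.
  - intros y Ay. specialize (AW _ Ay). simpl in AW. rewrite mulKVg in AW. exact AW.
  - rewrite mulVg. exact A1.
  - exists (relL A). split; [exact (@relL_leftUnif A Ao A1) |].
    intros a b Aa Ab Aab. apply Ab. unfold relL in Aab.
    specialize (AM _ _ Aa Aab). rewrite <- mulA, mulKVg in AM. exact AM.
Qed.

Lemma zero_dim_of_local_base : open_subgroups_local_base G -> unif_zero_dim (@leftUnif G).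
Proof.
  intros H U [W [Wo [We WU]]].
  destruct (H W Wo We) as [A [[Asub Ao] AW]].
  exists (relL A). split; [| split].
  - exact (@relL_leftUnif A Ao (proj1 Asub)).
  - exact (@relL_equivalence A Asub).
  - intros x y Axy. exact (WU _ _ (AW _ Axy)).
Qed.

Lemma zero_dim_tfae :
  (unif_zero_dim (@leftUnif G) <-> strongly_zero_dim_at (@leftUnif G) E) /\
  (strongly_zero_dim_at (@leftUnif G) E <-> strongly_zero_dim (@leftUnif G)) /\
  (strongly_zero_dim (@leftUnif G) <-> open_subgroups_local_base G).
Proof.
  assert (iii_ii : strongly_zero_dim (@leftUnif G) -> strongly_zero_dim_at (@leftUnif G) E)
    by (intros H; apply H).
  pose proof zero_dim_strongly_at_e. pose proof local_base_of_strongly_at_e.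
  pose proof strongly_of_local_base. pose proof zero_dim_of_local_base.
  repeat split; auto.
Qed.

End LeftUniformity.

Definition left_uniformity_statement (G : TopGroup) : Prop :=
  (forall U : G -> G -> Prop, leftUnif U -> is_equivalence U ->
      open_subgroup (capL U) /\ subrel (relL (capL U)) U) /\
  ((forall A, open_subgroup A -> Ueq (@leftUnif G) (relL A)) /\
   (forall U, Ueq (@leftUnif G) U -> exists A, open_subgroup A /\ subrel (relL A) U)) /\
  ((unif_zero_dim (@leftUnif G) <-> strongly_zero_dim_at (@leftUnif G) (e G)) /\
   (strongly_zero_dim_at (@leftUnif G) (e G) <-> strongly_zero_dim (@leftUnif G)) /\
   (strongly_zero_dim (@leftUnif G) <-> open_subgroups_local_base G)).

Lemma left_uniformity_holds (G : TopGroup) : left_uniformity_statement G.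
Proof.
  split; [exact (@capL_open_subgroup G) |].
  split; [split; [exact (@open_subgroup_Ueq G) | exact (@Ueq_open_subgroup G)] |].
  exact (zero_dim_tfae G).
Qed.

(* In the opposite group, relL, capL and leftUnif are convertible to relR, capR
   and rightUnif of G, while the topology is unchanged. *)
Definition opp_group (G : TopGroup) : TopGroup.
Proof.
  refine (@Build_TopGroup (carrier G) (fun x y => mul G y x) (@inv G) (e G) (@is_open G)
            _ _ _ (open_full G) (open_inter G) (open_union G) _ (inv_cont G)).
  - intros x y z. symmetry. apply mulA.
  - apply mulg1.
  - apply mulgV.
  - intros x y W Wo Wyx. destruct (mul_cont G y x W Wo Wyx) as [U [V [Uo [Uy [Vo [Vx UVW]]]]]].
    exists V, U. repeat split; auto.
Defined.

Lemma open_subgroup_opp (G : TopGroup) : @open_subgroup (opp_group G) = @open_subgroup G.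
Proof.
  apply functional_extensionality. intros A. apply propositional_extensionality.
  unfold open_subgroup, subgroup. simpl. split; intros [[A1 [AM AV]] Ao];
    repeat split; auto.
Qed.

Lemma local_base_opp (G : TopGroup) :
  open_subgroups_local_base (opp_group G) = open_subgroups_local_base G.
Proof.
  unfold open_subgroups_local_base. rewrite open_subgroup_opp. reflexivity.
Qed.

Theorem mainTheorem15 (G : TopGroup) :
  (* left uniformity *)
  ((forall U : G -> G -> Prop, leftUnif U -> is_equivalence U ->
      open_subgroup (capL U) /\ subrel (relL (capL U)) U) /\
   ((forall A, open_subgroup A -> Ueq (@leftUnif G) (relL A)) /\
    (forall U, Ueq (@leftUnif G) U -> exists A, open_subgroup A /\ subrel (relL A) U)) /\
   ((unif_zero_dim (@leftUnif G) <-> strongly_zero_dim_at (@leftUnif G) (e G)) /\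
    (strongly_zero_dim_at (@leftUnif G) (e G) <-> strongly_zero_dim (@leftUnif G)) /\
    (strongly_zero_dim (@leftUnif G) <-> open_subgroups_local_base G))) /\
  (* right uniformity *)
  ((forall U : G -> G -> Prop, rightUnif U -> is_equivalence U ->
      open_subgroup (capR U) /\ subrel (relR (capR U)) U) /\
   ((forall A, open_subgroup A -> Ueq (@rightUnif G) (relR A)) /\
    (forall U, Ueq (@rightUnif G) U -> exists A, open_subgroup A /\ subrel (relR A) U)) /\
   ((unif_zero_dim (@rightUnif G) <-> strongly_zero_dim_at (@rightUnif G) (e G)) /\
    (strongly_zero_dim_at (@rightUnif G) (e G) <-> strongly_zero_dim (@rightUnif G)) /\
    (strongly_zero_dim (@rightUnif G) <-> open_subgroups_local_base G))).
Proof.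
  split; [exact (left_uniformity_holds G) |].
  pose proof (left_uniformity_holds (opp_group G)) as right.
  unfold left_uniformity_statement in right.
  rewrite open_subgroup_opp, local_base_opp in right.
  exact right.
Qed.
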